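(* Let $(f,I,U)$ be a safety verification problem that is robustly safe with robustness margin $\mu>0$, with $\overline{I}\cap\overline{U}=\emptyset$ and $\mathbb{R}^n\setminus U$ bounded, and let $V$ be a $\mu$-robust safety certificate of $(f,I,U)$. Let $\partial\overline{V}$ denote the boundary of the closure of $V$. Then for every $x\in R^{\mathbb{R}}_f(\partial\overline{V})$ there is precisely one $t\in\mathbb{R}$ such that $\varphi_f(x,t)\in\partial\overline{V}$.
   Context: A safety verification problem is a triple $(f,I,U)$ with $f:\mathbb{R}^n\to\mathbb{R}^n$ smooth, $I,U\subseteq\mathbb{R}^n$. Convention: the flow $\varphi_f(x,t)$ of $\dot x=f(x)$ (the state reached at time $t\in\mathbb{R}$ from $x$; negative $t$ allowed, $\varphi_f(x,t)=y$ iff $\varphi_f(y,-t)=x$) is defined for all $x$, $t$. For $X\subseteq\mathbb{R}^n$, $R^{\mathbb{R}}_f(X)=\{\varphi_f(x,t)\mid x\in X,\ t\in\mathbb{R}\}$. For $\varepsilon\ge 0$, an $\varepsilon$-solution of $\dot x=f(x)$ is a differentiable function $x:\mathbb{R}^{\ge0}\to\mathbb{R}^n$ with $\|f(x(t))-\dot x(t)\|\le\varepsilon$ for all $t\ge0$. For $X\subseteq\mathbb{R}^n$, $T\subseteq\mathbb{R}^{\ge0}$: $R^{T}_{f,\varepsilon}(X)=\{x(t)\mid t\in T,\ x\text{ an }\varepsilon\text{-solution with }x(0)\in X\}$, $R_{f,\varepsilon}(X)=R^{\mathbb{R}^{\ge0}}_{f,\varepsilon}(X)$. Robustly safe with robustness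 margin $\mu>0$ means $R_{f,\mu}(I)\cap U=\emptyset$. A $\mu$-robust safety certificate is a set $V$ with $I\subseteq V$, $R_{f,\mu}(V)\subseteq V$, $V\cap U=\emptyset$. *)

From Stdlib Require Import Reals Lra.
From Stdlib Require Vectors.Fin.
Open Scope R_scope.

Definition Rn (n : nat) : Type := Fin.t n -> R.

Fixpoint fsum (n : nat) : (Fin.t n -> R) -> R :=
  match n return (Fin.t n -> R) -> R with
  | O => fun _ => 0
  | S m => fun v => v Fin.F1 + fsum m (fun i => v (Fin.FS i))
  end.

Definition vadd {n} (x y : Rn n) : Rn n := fun i => x i + y i.
Definition vsub {n} (x y : Rn n) : Rn n := fun i => x i - y i.
Definition vscale {n} (a : R) (x : Rn n) : Rn n := fun i => a * x i.
Definition basis {n} (i : Fin.t n) : Rn n :=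
  fun j => if Fin.eq_dec i j then 1 else 0.

Definition norm_Rn {n} (x : Rn n) : R := sqrt (fsum n (fun i => x i * x i)).
Definition dist_Rn {n} (x y : Rn n) : R := norm_Rn (vsub x y).

Definition closure_Rn {n} (A : Rn n -> Prop) : Rn n -> Prop :=
  fun x => forall eps, 0 < eps -> exists y, A y /\ dist_Rn x y < eps.
Definition complement_Rn {n} (A : Rn n -> Prop) : Rn n -> Prop := fun x => ~ A x.
Definition boundary_Rn {n} (A : Rn n -> Prop) : Rn n -> Prop :=
  fun x => closure_Rn A x /\ closure_Rn (complement_Rn A) x.
Definition bounded_Rn {n} (A : Rn n -> Prop) : Prop :=
  exists M, forall x, A x -> norm_Rn x <= M.

Definition continuous_Rn {n} (g : Rn n -> R) : Prop :=
  forall x eps, 0 < eps -> exists delta, 0 < delta /\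
    forall y, dist_Rn y x < delta -> Rabs (g y - g x) < eps.

Fixpoint Ck {n} (k : nat) (g : Rn n -> R) : Prop :=
  match k with
  | O => continuous_Rn g
  | S k' => continuous_Rn g /\
      forall i : Fin.t n, exists dg : Rn n -> R,
        (forall x, derivable_pt_lim (fun h => g (vadd x (vscale h (basis i)))) 0 (dg x))
        /\ Ck k' dg
  end.

Definition smooth {n} (f : Rn n -> Rn n) : Prop :=
  forall (j : Fin.t n) (k : nat), Ck k (fun x => f x j).

Definition has_deriv_nonneg {n} (x : R -> Rn n) (t : R) (d : Rn n) : Prop :=
  forall i : Fin.t n, forall eps, 0 < eps -> exists delta, 0 < delta /\
    forall s, 0 <= s -> s <> t -> Rabs (s - t) < delta ->
      Rabs ((x s i - x t i) / (s - t) - d i) < eps.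

(** eps-solution: a differentiable x : R>=0 -> R^n with |f(x t) - x'(t)| <= eps.
    (Values of x at negative times are irrelevant.) *)
Definition eps_solution {n} (f : Rn n -> Rn n) (eps : R) (x : R -> Rn n) : Prop :=
  exists dx : R -> Rn n,
    forall t, 0 <= t -> has_deriv_nonneg x t (dx t) /\ norm_Rn (vsub (f (x t)) (dx t)) <= eps.

Definition reach {n} (f : Rn n -> Rn n) (eps : R) (X : Rn n -> Prop) : Rn n -> Prop :=
  fun y => exists (x : R -> Rn n) (t : R),
    eps_solution f eps x /\ X (x 0) /\ 0 <= t /\ y = x t.

Definition is_flow {n} (f : Rn n -> Rn n) (phi : Rn n -> R -> Rn n) : Prop :=
  forall x, phi x 0 = x /\
    forall t (i : Fin.t n), derivable_pt_lim (fun s => phi x s i) t (f (phi x t) i).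

Definition reach_flow {n} (phi : Rn n -> R -> Rn n) (X : Rn n -> Prop) : Rn n -> Prop :=
  fun y => exists x t, X x /\ y = phi x t.

Definition robustly_safe {n} (f : Rn n -> Rn n) (I U : Rn n -> Prop) (mu : R) : Prop :=
  forall y, reach f mu I y -> ~ U y.

Definition robust_certificate {n} (f : Rn n -> Rn n) (I U : Rn n -> Prop) (mu : R)
  (V : Rn n -> Prop) : Prop :=
  (forall x, I x -> V x) /\ (forall y, reach f mu V y -> V y) /\ (forall x, V x -> ~ U x).

(* If a trajectory [g] meets
   the closure of [V] at time [s], then at every later time [s'] a whole ball around [g s'] lies
   in [V]: from a point of [V] near [g s], a [mu]-solution can shadow [g] with a small
   quadratic correction, reach any prescribed point near [g s'], and continue along the flow.
   A point of the boundary of the closure of [V] has points outside that closure arbitrarily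
   close, so no trajectory meets that boundary twice. It meets it at least once by the group
   property of the flow, which follows from uniqueness of solutions for the locally Lipschitz
   (because smooth) field [f]. *)

From Stdlib Require Import Reals Lra Lia Classical FunctionalExtensionality.
From Coquelicot Require Coquelicot.
Open Scope R_scope.

Definition norm1 {n} (v : Rn n) : R := fsum n (fun i => Rabs (v i)).

Definition box {n} (p : Rn n) (r : R) (a : Rn n) : Prop := forall i, Rabs (a i - p i) < r.

Lemma fsum_ext n (a b : Fin.t n -> R) : (forall i, a i = b i) -> fsum n a = fsum n b.
Proof.
  induction n; simpl; intros H; [reflexivity|].
  rewrite H, (IHn (fun i => a (Fin.FS i)) (fun i => b (Fin.FS i))); auto.
Qed.

Lemma fsum_le n (a b : Fin.t n -> R) : (forall i, a i <= b i) -> fsum n a <= fsum n b.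
Proof.
  induction n; simpl; intros H; [lra|].
  specialize (IHn (fun i => a (Fin.FS i)) (fun i => b (Fin.FS i)) (fun i => H _)).
  specialize (H Fin.F1). lra.
Qed.

Lemma fsum_plus n (a b : Fin.t n -> R) : fsum n (fun i => a i + b i) = fsum n a + fsum n b.
Proof.
  induction n; simpl; [lra|].
  rewrite (IHn (fun i => a (Fin.FS i)) (fun i => b (Fin.FS i))). lra.
Qed.

Lemma fsum_const n c : fsum n (fun _ => c) = INR n * c.
Proof. induction n; simpl fsum; [simpl; lra|]. rewrite IHn, S_INR. lra. Qed.

Lemma fsum_nonneg n (a : Fin.t n -> R) : (forall i, 0 <= a i) -> 0 <= fsum n a.
Proof. intros H. rewrite <- (Rmult_0_r (INR n)), <- fsum_const. apply fsum_le; auto. Qed.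

Lemma fsum_term_le n (a : Fin.t n -> R) i : (forall j, 0 <= a j) -> a i <= fsum n a.
Proof.
  induction n as [|m IH]; intros H; [inversion i|].
  simpl. pattern i; apply Fin.caseS'.
  - pose proof (fsum_nonneg m (fun j => a (Fin.FS j)) (fun j => H _)). lra.
  - intros p. pose proof (IH (fun j => a (Fin.FS j)) p (fun j => H _)). pose proof (H Fin.F1).
    simpl in *. lra.
Qed.

Lemma continuity_pt_fsum n (G : Fin.t n -> R -> R) t :
  (forall i, continuity_pt (G i) t) -> continuity_pt (fun s => fsum n (fun i => G i s)) t.
Proof.
  induction n as [|m IH]; intros H; simpl.
  - apply continuity_pt_const. intros u v; reflexivity.
  - apply (continuity_pt_plus (G Fin.F1) (fun s => fsum m (fun i => G (Fin.FS i) s))); auto.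
Qed.

Lemma norm1_nonneg n (v : Rn n) : 0 <= norm1 v.
Proof. apply fsum_nonneg. intros; apply Rabs_pos. Qed.

Lemma Rabs_le_norm1 n (v : Rn n) i : Rabs (v i) <= norm1 v.
Proof. apply (fsum_term_le n (fun j => Rabs (v j))). intros; apply Rabs_pos. Qed.

Lemma norm1_le_INR_mul n (v : Rn n) c : (forall i, Rabs (v i) <= c) -> norm1 v <= INR n * c.
Proof. intros H. rewrite <- fsum_const. apply fsum_le; auto. Qed.

Lemma norm1_vsub_triang n (q m p : Rn n) : norm1 (vsub q p) <= norm1 (vsub q m) + norm1 (vsub m p).
Proof.
  unfold norm1, vsub. rewrite <- fsum_plus. apply fsum_le. intros i.
  replace (q i - p i) with ((q i - m i) + (m i - p i)) by ring. apply Rabs_triang.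
Qed.

Lemma norm_le_norm1 n (v : Rn n) : norm_Rn v <= norm1 v.
Proof.
  unfold norm_Rn. rewrite <- (sqrt_Rsqr (norm1 v)) by apply norm1_nonneg.
  apply sqrt_le_1_alt. unfold Rsqr, norm1. clear.
  induction n as [|m IH]; simpl; [lra|].
  specialize (IH (fun j => v (Fin.FS j))).
  pose proof (fsum_nonneg m (fun i => Rabs (v (Fin.FS i))) (fun i => Rabs_pos _)).
  pose proof (Rabs_pos (v Fin.F1)). pose proof (Rsqr_abs (v Fin.F1)). unfold Rsqr in *. nra.
Qed.

Lemma Rabs_le_norm n (v : Rn n) i : Rabs (v i) <= norm_Rn v.
Proof.
  unfold norm_Rn. rewrite <- (sqrt_Rsqr (Rabs (v i))) by apply Rabs_pos.
  apply sqrt_le_1_alt. rewrite <- Rsqr_abs. unfold Rsqr.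
  apply (fsum_term_le n (fun j => v j * v j)). intros; nra.
Qed.

Lemma norm_vsub_sym n (a b : Rn n) : norm_Rn (vsub a b) = norm_Rn (vsub b a).
Proof. unfold norm_Rn, vsub. f_equal. apply fsum_ext. intros; ring. Qed.

Lemma norm_vsub_diag n (a : Rn n) : norm_Rn (vsub a a) = 0.
Proof.
  unfold norm_Rn, vsub. rewrite <- sqrt_0. f_equal.
  rewrite (fsum_ext n _ (fun _ => 0)) by (intros; ring). rewrite fsum_const; ring.
Qed.

Lemma INR_mul_lt_of_le_div n d x : 0 < d -> 0 <= x -> x <= d / (INR n + 1) -> INR n * x < d.
Proof.
  intros Hd Hx Hxd. pose proof (pos_INR n) as Hn.
  apply Rle_lt_trans with (INR n * (d / (INR n + 1))); [apply Rmult_le_compat_l; auto|].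
  apply Rmult_lt_reg_r with (INR n + 1); [lra|].
  replace (INR n * (d / (INR n + 1)) * (INR n + 1)) with (INR n * d) by (field; lra). nra.
Qed.

Lemma fin_choice_small_large n (P : Fin.t n -> R -> R -> Prop) :
  (forall j d d' M M', 0 < d' <= d -> M <= M' -> P j d M -> P j d' M') ->
  (forall j, exists d M, 0 < d /\ P j d M) ->
  exists d M, 0 < d /\ forall j, P j d M.
Proof.
  induction n as [|m IH]; intros Hmono H.
  - exists 1, 0. split; [lra|]. intros j; inversion j.
  - destruct (IH (fun j => P (Fin.FS j))) as [d1 [M1 [Hd1 H1]]].
    { intros; eapply Hmono; eauto. } { intros; apply H. }
    destruct (H Fin.F1) as [d0 [M0 [Hd0 H0]]].
    assert (Hd : 0 < Rmin d0 d1) by (apply Rmin_glb_lt; auto).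
    exists (Rmin d0 d1), (Rmax M0 M1). split; [exact Hd|].
    intros j. pattern j; apply Fin.caseS'.
    + eapply Hmono; [|apply Rmax_l|exact H0]. split; [exact Hd|apply Rmin_l].
    + intros p. eapply Hmono; [|apply Rmax_r|exact (H1 p)]. split; [exact Hd|apply Rmin_r].
Qed.

Lemma fin_choice_small n (P : Fin.t n -> R -> Prop) :
  (forall j d d', 0 < d' <= d -> P j d -> P j d') ->
  (forall j, exists d, 0 < d /\ P j d) ->
  exists d, 0 < d /\ forall j, P j d.
Proof.
  intros Hmono H. destruct (fin_choice_small_large n (fun j d (_ : R) => P j d)) as [d [_ [Hd Hp]]].
  - intros; eapply Hmono; eauto.
  - intros j; destruct (H j) as [d Hd]; exists d, 0; tauto.
  - eauto.
Qed.

Lemma continuity_pt_eps_delta g x : continuity_pt g x ->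
  forall e, 0 < e -> exists d, 0 < d /\ forall y, Rabs (y - x) < d -> Rabs (g y - g x) < e.
Proof.
  intros Hc e He. destruct (Hc e He) as [d [Hd Hd2]]. exists d. split; auto.
  intros y Hy. destruct (Req_dec y x) as [->|Hne].
  - unfold Rminus; rewrite Rplus_opp_r, Rabs_R0; auto.
  - apply Hd2. split; [split; [exact I| auto]|]. exact Hy.
Qed.

Lemma continuity_pt_zero_from_left h l c : continuity_pt h c -> l < c ->
  (forall s, l <= s < c -> h s = 0) -> h c = 0.
Proof.
  intros Hc Hlc H. apply NNPP. intros Hne.
  destruct (continuity_pt_eps_delta h c Hc (Rabs (h c))) as [d [Hd Hnear]]; [apply Rabs_pos_lt; auto|].
  set (s := Rmax l (c - d / 2)).
  assert (Hs : l <= s < c) by (split; [apply Rmax_l|apply Rmax_lub_lt; lra]).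
  assert (Hsc : Rabs (s - c) < d).
  { assert (c - d / 2 <= s) by apply Rmax_r. rewrite Rabs_left; lra. }
  specialize (Hnear s Hsc). rewrite H, Rminus_0_l, Rabs_Ropp in Hnear by auto. lra.
Qed.

Lemma is_lub_approx E c s : is_lub E c -> s < c -> exists u, E u /\ s < u.
Proof.
  intros [Hub Hl] Hs. destruct (classic (exists u, E u /\ s < u)) as [H|H]; auto.
  exfalso. assert (c <= s); [|lra]. apply Hl. intros u Hu. destruct (Rle_dec u s); auto.
  exfalso; apply H; exists u; split; auto; lra.
Qed.

(** * Smooth vector fields are locally Lipschitz *)

Lemma increment_le_of_deriv_bound (phi dphi : R -> R) x y M :
  (forall s, derivable_pt_lim phi s (dphi s)) ->
  (forall s, Rmin x y <= s <= Rmax x y -> Rabs (dphi s) <= M) ->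
  Rabs (phi y - phi x) <= M * Rabs (y - x).
Proof.
  intros Hd HM.
  assert (Hlt : forall u v, u < v -> (forall s, u <= s <= v -> Rabs (dphi s) <= M) ->
            Rabs (phi v - phi u) <= M * Rabs (v - u)).
  { intros u v Huv HMuv. destruct (MVT_cor2 phi dphi u v) as [c [-> Hc]]; auto.
    rewrite Rabs_mult. apply Rmult_le_compat_r; [apply Rabs_pos|]. apply HMuv; lra. }
  destruct (Rtotal_order x y) as [Hxy|[<-|Hxy]].
  - apply Hlt; auto. intros s Hs. apply HM. rewrite Rmin_left, Rmax_right; lra.
  - rewrite !Rminus_diag, Rabs_R0, Rmult_0_r. pose proof (Rabs_pos (dphi x)).
    pose proof (HM x (conj (Rmin_l x x) (Rmax_l x x))). lra.
  - rewrite <- (Rabs_Ropp (phi y - phi x)), <- (Rabs_Ropp (y - x)), !Ropp_minus_distr.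
    apply Hlt; auto. intros s Hs. apply HM. rewrite Rmin_right, Rmax_left; lra.
Qed.

Lemma partial_increment_le n (g dg : Rn n -> R) k p r M (b : Rn n) h :
  (forall x, derivable_pt_lim (fun h => g (vadd x (vscale h (basis k)))) 0 (dg x)) ->
  (forall q, box p r q -> Rabs (dg q) <= M) ->
  box p r b -> box p r (vadd b (vscale h (basis k))) ->
  Rabs (g (vadd b (vscale h (basis k))) - g b) <= M * Rabs h.
Proof.
  intros Hd HM Hb Hbh.
  set (line := fun s => vadd b (vscale s (basis k))).
  assert (Hline : forall s s', vadd (line s) (vscale s' (basis k)) = line (s + s')).
  { intros s s'. apply functional_extensionality; intros i. unfold line, vadd, vscale. ring. }
  assert (Hline0 : line 0 = b).
  { apply functional_extensionality; intros i. unfold line, vadd, vscale. ring. }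
  change (Rabs (g (line h) - g b) <= M * Rabs h).
  rewrite <- Hline0. replace h with (h - 0) at 2 by ring.
  apply (increment_le_of_deriv_bound (fun s => g (line s)) (fun s => dg (line s))).
  - intros s eps Heps. destruct (Hd (line s) eps Heps) as [d Hdd]. exists d. intros u Hu Hud.
    specialize (Hdd u Hu Hud). rewrite !Hline, Rplus_0_l, Rplus_0_r in Hdd. exact Hdd.
  - intros s Hs. apply HM. intros i. specialize (Hb i). specialize (Hbh i).
    unfold line, vadd, vscale, basis in *. destruct (Fin.eq_dec k i); [|rewrite Rmult_0_r, Rplus_0_r in *; auto].
    rewrite Rmult_1_r in *. apply Rabs_def2 in Hb, Hbh. apply Rabs_def1.
    + destruct (Rle_dec 0 h); [rewrite Rmin_left, Rmax_right in Hs|rewrite Rmin_right, Rmax_left in Hs]; lra.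
    + destruct (Rle_dec 0 h); [rewrite Rmin_left, Rmax_right in Hs|rewrite Rmin_right, Rmax_left in Hs]; lra.
Qed.

Lemma norm1_add_basis n (v : Rn n) k c : v k = 0 ->
  Rabs c + norm1 v <= norm1 (vadd v (vscale c (basis k))).
Proof.
  intros Hvk.
  pose proof (fsum_term_le n (fun i => if Fin.eq_dec k i then Rabs c else 0) k) as Hc.
  simpl in Hc. destruct (Fin.eq_dec k k) as [_|]; [|congruence].
  eapply Rle_trans; [apply Rplus_le_compat_r, Hc|].
  { intros j; destruct (Fin.eq_dec k j); [apply Rabs_pos|lra]. }
  unfold norm1. rewrite <- fsum_plus. apply fsum_le. intros i. unfold vadd, vscale, basis.
  destruct (Fin.eq_dec k i) as [<-|].
  - rewrite Hvk, Rabs_R0, Rplus_0_l, Rmult_1_r. lra.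
  - rewrite Rmult_0_r, Rplus_0_r. lra.
Qed.

Definition fin_index {n} (i : Fin.t n) : nat := proj1_sig (Fin.to_nat i).

(* Moves from [b] to [a] one coordinate at a time as [m] runs from [0] to [n]. *)
Definition mix {n} (m : nat) (a b : Rn n) : Rn n :=
  fun i => if Compare_dec.lt_dec (fin_index i) m then a i else b i.

Lemma mix_0 n (a b : Rn n) : mix 0 a b = b.
Proof.
  apply functional_extensionality; intros i. unfold mix.
  destruct (Compare_dec.lt_dec (fin_index i) 0); [lia|auto].
Qed.

Lemma mix_n n (a b : Rn n) : mix n a b = a.
Proof.
  apply functional_extensionality; intros i. unfold mix.
  destruct (Compare_dec.lt_dec (fin_index i) n) as [|Hi]; auto.
  exfalso; apply Hi, (proj2_sig (Fin.to_nat i)).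
Qed.

Lemma mix_succ n m (Hm : (m < n)%nat) (a b : Rn n) :
  let k := Fin.of_nat_lt Hm in
  mix (S m) a b = vadd (mix m a b) (vscale (a k - b k) (basis k)) /\ mix m a b k = b k.
Proof.
  intros k.
  assert (Hk : forall i, fin_index i = m <-> k = i).
  { intros i. unfold k, fin_index. split.
    - intros <-. apply Fin.to_nat_inj. rewrite Fin.to_nat_of_nat. reflexivity.
    - intros <-. rewrite Fin.to_nat_of_nat. reflexivity. }
  assert (Hkm : fin_index k = m) by (apply Hk; auto).
  split.
  - apply functional_extensionality; intros i. unfold mix, vadd, vscale, basis.
    destruct (Fin.eq_dec k i) as [<-|Hne].
    + destruct (Compare_dec.lt_dec (fin_index k) m), (Compare_dec.lt_dec (fin_index k) (S m));
        lia || lra.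
    + assert (fin_index i <> m) by (intros He; apply Hne, Hk, He).
      destruct (Compare_dec.lt_dec (fin_index i) m), (Compare_dec.lt_dec (fin_index i) (S m));
        lia || lra.
  - unfold mix. destruct (Compare_dec.lt_dec (fin_index k) m); [lia|auto].
Qed.

Lemma lipschitz_on_box_of_partials n (g : Rn n -> R) p r M :
  (forall k, exists dg, (forall x, derivable_pt_lim (fun h => g (vadd x (vscale h (basis k)))) 0 (dg x))
       /\ forall q, box p r q -> Rabs (dg q) <= M) ->
  forall a b, box p r a -> box p r b -> Rabs (g a - g b) <= M * norm1 (vsub a b).
Proof.
  intros Hg a b Ha Hb.
  assert (Hmix_box : forall m, box p r (mix m a b)).
  { intros m i. unfold mix. destruct (Compare_dec.lt_dec (fin_index i) m); auto. }
  enough (Hm : forall m, (m <= n)%nat ->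
            Rabs (g (mix m a b) - g b) <= M * norm1 (vsub (mix m a b) b))
    by (rewrite <- (mix_n n a b) at 1 2; auto).
  induction m as [|m IH]; intros Hmn.
  - rewrite mix_0, Rminus_diag, Rabs_R0.
    replace (norm1 (vsub b b)) with 0; [lra|].
    unfold norm1, vsub. rewrite (fsum_ext n _ (fun _ => 0)), fsum_const; [ring|].
    intros i. rewrite Rminus_diag. apply Rabs_R0.
  - destruct (mix_succ n m Hmn a b) as [Hstep Hkb]. set (k := Fin.of_nat_lt Hmn) in *.
    destruct (Hg k) as [dg [Hdg HM]].
    assert (HM0 : 0 <= M) by (eapply Rle_trans; [apply Rabs_pos|apply (HM b Hb)]).
    pose proof (partial_increment_le n g dg k p r M (mix m a b) (a k - b k) Hdg HM
                  (Hmix_box m) ltac:(rewrite <- Hstep; apply Hmix_box)) as Hinc.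
    assert (Hsum : Rabs (a k - b k) + norm1 (vsub (mix m a b) b)
                   <= norm1 (vsub (mix (S m) a b) b)).
    { replace (vsub (mix (S m) a b) b)
        with (vadd (vsub (mix m a b) b) (vscale (a k - b k) (basis k))).
      - apply norm1_add_basis. unfold vsub. rewrite Hkb. ring.
      - rewrite Hstep. apply functional_extensionality; intros i. unfold vadd, vsub, vscale. ring. }
    rewrite <- Hstep in Hinc. specialize (IH ltac:(lia)).
    replace (g (mix (S m) a b) - g b)
      with ((g (mix (S m) a b) - g (mix m a b)) + (g (mix m a b) - g b)) by ring.
    eapply Rle_trans; [apply Rabs_triang|].
    eapply Rle_trans; [|apply Rmult_le_compat_l; [exact HM0|exact Hsum]]. lra.
Qed.

Definition locally_lipschitz {n} (F : Rn n -> Rn n) : Prop :=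
  forall p, exists r L, 0 < r /\ 0 <= L /\ forall a b, box p r a -> box p r b ->
    norm1 (vsub (F a) (F b)) <= L * norm1 (vsub a b).

Lemma Ck1_lipschitz_near n (g : Rn n -> R) p : Ck 1 g ->
  exists d M, 0 < d /\ forall a b, box p d a -> box p d b -> Rabs (g a - g b) <= M * norm1 (vsub a b).
Proof.
  intros [_ Hpartial].
  destruct (fin_choice_small_large n (fun k d M => exists dg,
      (forall x, derivable_pt_lim (fun h => g (vadd x (vscale h (basis k)))) 0 (dg x))
      /\ forall q, box p d q -> Rabs (dg q) <= M)) as [d [M [Hd HdM]]].
  - intros k d d' M M' Hd' HM' [dg [H1 H2]]. exists dg. split; auto. intros q Hq.
    eapply Rle_trans; [apply H2|auto]. intros i; specialize (Hq i); lra.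
  - intros k. destruct (Hpartial k) as [dg [Hdg Hcont]]. simpl in Hcont.
    destruct (Hcont p 1) as [del [Hdel Hnear]]; [lra|].
    assert (HN : 0 < INR n + 1) by (pose proof (pos_INR n); lra).
    exists (del / (INR n + 1)), (Rabs (dg p) + 1). split; [apply Rdiv_lt_0_compat; auto|].
    exists dg. split; auto. intros q Hq.
    assert (Hq' : dist_Rn q p < del).
    { unfold dist_Rn. eapply Rle_lt_trans; [apply norm_le_norm1|].
      eapply Rle_lt_trans; [apply norm1_le_INR_mul; intros i; left; apply Hq|].
      apply INR_mul_lt_of_le_div; [lra|apply Rlt_le, Rdiv_lt_0_compat; lra|apply Rle_refl]. }
    specialize (Hnear q Hq'). pose proof (Rabs_triang_inv (dg q) (dg p)). lra.
  - exists d, M. split; auto. apply (lipschitz_on_box_of_partials n g p d M HdM).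
Qed.

Lemma smooth_locally_lipschitz n (f : Rn n -> Rn n) : smooth f -> locally_lipschitz f.
Proof.
  intros Hs p.
  destruct (fin_choice_small_large n (fun j d M => forall a b, box p d a -> box p d b ->
              Rabs (f a j - f b j) <= M * norm1 (vsub a b))) as [d [M [Hd HM]]].
  - intros j d d' M M' Hd' HM' H a b Ha Hb. eapply Rle_trans.
    + apply H; intros i; [specialize (Ha i)|specialize (Hb i)]; lra.
    + apply Rmult_le_compat_r; auto. apply norm1_nonneg.
  - intros j. apply (Ck1_lipschitz_near n (fun x => f x j) p (Hs j 1%nat)).
  - exists d, (INR n * Rmax M 0). split; auto. split; [apply Rmult_le_pos; [apply pos_INR|apply Rmax_r]|].
    intros a b Ha Hb. rewrite Rmult_assoc. apply norm1_le_INR_mul. intros j.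
    eapply Rle_trans; [apply HM; auto|]. apply Rmult_le_compat_r; [apply norm1_nonneg|apply Rmax_l].
Qed.

(** * Uniqueness of solutions and the flow property *)

Definition solves {n} (F : Rn n -> Rn n) (g : R -> Rn n) : Prop :=
  forall t i, derivable_pt_lim (fun s => g s i) t (F (g t) i).

Section Solutions.

Variables (n : nat) (F : Rn n -> Rn n).

Lemma solves_continuity_pt (g : R -> Rn n) i t : solves F g -> continuity_pt (fun s => g s i) t.
Proof. intros H. apply derivable_continuous_pt. exists (F (g t) i). apply H. Qed.

Lemma solves_stays_in_box (g : R -> Rn n) t0 r : solves F g -> 0 < r ->
  exists d, 0 < d /\ forall t, Rabs (t - t0) < d -> box (g t0) r (g t).
Proof.
  intros Hg Hr.
  destruct (fin_choice_small n (fun i d => forall t, Rabs (t - t0) < d -> Rabs (g t i - g t0 i) < r))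
    as [d [Hd H]].
  - intros j d d' Hd' Hj t Ht. apply Hj. lra.
  - intros j. apply continuity_pt_eps_delta; auto. apply solves_continuity_pt, Hg.
  - exists d. split; auto. intros t Ht i. apply H; auto.
Qed.

Lemma continuity_pt_norm1_vsub (a b : R -> Rn n) t : solves F a -> solves F b ->
  continuity_pt (fun s => norm1 (vsub (a s) (b s))) t.
Proof.
  intros Ha Hb. apply (continuity_pt_fsum n (fun i s => Rabs (a s i - b s i))). intros i.
  apply (continuity_pt_comp (fun s => a s i - b s i) Rabs); [|apply Rcontinuity_abs].
  apply continuity_pt_minus; apply solves_continuity_pt; auto.
Qed.

Lemma solves_agree_on_lipschitz_box (a b : R -> Rn n) t0 h p r L :
  solves F a -> solves F b -> a t0 = b t0 -> 0 <= h -> 0 <= L -> INR n * L * h < 1 ->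
  (forall x y, box p r x -> box p r y -> norm1 (vsub (F x) (F y)) <= L * norm1 (vsub x y)) ->
  (forall t, t0 <= t <= t0 + h -> box p r (a t) /\ box p r (b t)) ->
  forall t, t0 <= t <= t0 + h -> a t = b t.
Proof.
  intros Ha Hb H0 Hh HL HLh HLip Hbox.
  set (e := fun t => norm1 (vsub (a t) (b t))).
  assert (He0 : forall t, 0 <= e t) by (intros; apply norm1_nonneg).
  destruct (continuity_ab_maj e t0 (t0 + h)) as [tm [Hmax Htm]]; [lra| |].
  { intros; apply continuity_pt_norm1_vsub; auto. }
  (* [tm] maximises [e] on [[t0, t0 + h]], which bounds the derivative of [a - b] there. *)
  assert (Hcoord : forall i, Rabs (a tm i - b tm i) <= L * e tm * h).
  { intros i.
    replace (a tm i - b tm i) with ((a tm i - b tm i) - (a t0 i - b t0 i)) by (rewrite H0; ring).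
    eapply Rle_trans.
    - apply (increment_le_of_deriv_bound (fun s => a s i - b s i)
               (fun s => F (a s) i - F (b s) i) t0 tm (L * e tm)).
      + intros s. apply derivable_pt_lim_minus; [apply Ha|apply Hb].
      + intros s Hs. rewrite Rmin_left, Rmax_right in Hs by lra.
        destruct (Hbox s) as [Has Hbs]; [lra|].
        eapply Rle_trans; [apply (Rabs_le_norm1 n (vsub (F (a s)) (F (b s))) i)|].
        eapply Rle_trans; [apply HLip; auto|].
        apply Rmult_le_compat_l; auto. apply Hmax; lra.
    - apply Rmult_le_compat_l; [apply Rmult_le_pos; auto|].
      rewrite Rabs_right; lra. }
  assert (Hetm : e tm = 0).
  { pose proof (norm1_le_INR_mul n (vsub (a tm) (b tm)) _ Hcoord). fold (e tm) in H.
    pose proof (He0 tm). pose proof (pos_INR n). nra. }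
  intros t Ht. apply functional_extensionality; intros i.
  pose proof (Rabs_le_norm1 n (vsub (a t) (b t)) i) as Hi. fold (e t) in Hi. unfold vsub in Hi.
  pose proof (Hmax t Ht). pose proof (Rabs_pos (a t i - b t i)).
  destruct (Req_dec (a t i - b t i) 0) as [|Hne]; [lra|].
  apply Rabs_no_R0 in Hne. lra.
Qed.

Lemma solves_unique_locally (a b : R -> Rn n) t0 :
  locally_lipschitz F -> solves F a -> solves F b -> a t0 = b t0 ->
  exists h, 0 < h /\ forall t, t0 <= t <= t0 + h -> a t = b t.
Proof.
  intros HF Ha Hb H0.
  destruct (HF (a t0)) as [r [L [Hr [HL HLip]]]].
  destruct (solves_stays_in_box a t0 r Ha Hr) as [da [Hda Hbox_a]].
  destruct (solves_stays_in_box b t0 r Hb Hr) as [db [Hdb Hbox_b]].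
  assert (HK : 0 <= INR n * L) by (apply Rmult_le_pos; [apply pos_INR|auto]).
  set (h := Rmin (Rmin da db / 2) (/ (2 * (INR n * L + 1)))).
  assert (Hh : 0 < h) by (repeat apply Rmin_glb_lt; try apply Rinv_0_lt_compat; try apply Rdiv_lt_0_compat; try apply Rmin_glb_lt; lra).
  assert (Hhd : h <= Rmin da db / 2) by apply Rmin_l.
  assert (Hda' : Rmin da db <= da) by apply Rmin_l. assert (Hdb' : Rmin da db <= db) by apply Rmin_r.
  assert (HKh : INR n * L * h < 1).
  { assert (h <= / (2 * (INR n * L + 1))) by apply Rmin_r.
    assert (INR n * L * / (2 * (INR n * L + 1)) < 1); [|nra].
    apply Rmult_lt_reg_r with (2 * (INR n * L + 1)); [lra|].
    rewrite Rmult_assoc, Rinv_l by lra. lra. }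
  exists h. split; auto.
  apply (solves_agree_on_lipschitz_box a b t0 h (a t0) r L); auto; [lra|].
  intros t Ht. split.
  - apply Hbox_a. rewrite Rabs_right; lra.
  - rewrite H0. apply Hbox_b. rewrite Rabs_right; lra.
Qed.

Lemma solves_unique_forward (a b : R -> Rn n) :
  locally_lipschitz F -> solves F a -> solves F b -> a 0 = b 0 ->
  forall t, 0 <= t -> a t = b t.
Proof.
  intros HF Ha Hb H0 t Ht.
  set (E := fun u => 0 <= u <= t /\ forall s, 0 <= s <= u -> a s = b s).
  assert (HE0 : E 0) by (split; [lra|]; intros s Hs; replace s with 0 by lra; auto).
  destruct (completeness E) as [c Hc].
  { exists t. intros u [Hu _]. lra. } { exists 0; auto. }
  assert (Hc0 : 0 <= c) by (apply (proj1 Hc); auto).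
  assert (Hct : c <= t) by (apply (proj2 Hc); intros u [Hu _]; lra).
  assert (Hbelow : forall s, 0 <= s < c -> a s = b s).
  { intros s Hs. destruct (is_lub_approx E c s Hc) as [u [[_ Hu] Hsu]]; [lra|]. apply Hu. lra. }
  assert (Hc_eq : a c = b c).
  { destruct (Req_dec c 0) as [->|Hc_ne]; auto.
    apply functional_extensionality; intros i. apply Rminus_diag_uniq.
    apply (continuity_pt_zero_from_left (fun s => a s i - b s i) 0 c); [|lra|].
    - apply continuity_pt_minus; apply solves_continuity_pt; auto.
    - intros s Hs. rewrite (Hbelow s); [ring|lra]. }
  assert (Hupto : forall s, 0 <= s <= c -> a s = b s).
  { intros s Hs. destruct (Req_dec s c) as [->|]; auto. apply Hbelow; lra. }
  destruct (solves_unique_locally a b c HF Ha Hb Hc_eq) as [h [Hh Hloc]].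
  assert (HE : E (Rmin t (c + h))).
  { split; [split; [apply Rmin_glb; lra|apply Rmin_l]|].
    intros s Hs. assert (s <= c + h) by (eapply Rle_trans; [apply Hs|apply Rmin_r]).
    destruct (Rle_dec s c); [apply Hupto|apply Hloc]; lra. }
  pose proof (proj1 Hc _ HE) as Hle.
  destruct (Rle_dec t (c + h)).
  - rewrite Rmin_left in Hle by lra. apply Hupto. lra.
  - rewrite Rmin_right in Hle by lra. lra.
Qed.

End Solutions.

Lemma locally_lipschitz_opp n (F : Rn n -> Rn n) :
  locally_lipschitz F -> locally_lipschitz (fun x => vscale (-1) (F x)).
Proof.
  intros H p. destruct (H p) as [r [L [Hr [HL HLip]]]]. exists r, L. repeat split; auto.
  intros a b Ha Hb. eapply Rle_trans; [|apply HLip; auto]. right. unfold norm1, vsub, vscale.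
  apply fsum_ext. intros i. rewrite <- Rabs_Ropp. f_equal. ring.
Qed.

Lemma solves_time_reversal n F (a : R -> Rn n) :
  solves F a -> solves (fun x => vscale (-1) (F x)) (fun s => a (- s)).
Proof.
  intros H t i. unfold vscale. rewrite Rmult_comm.
  apply (derivable_pt_lim_comp (fun s => - s) (fun s => a s i)); [|apply H].
  apply (derivable_pt_lim_opp (fun s => s) t 1), derivable_pt_lim_id.
Qed.

Lemma solves_unique n F (a b : R -> Rn n) :
  locally_lipschitz F -> solves F a -> solves F b -> a 0 = b 0 -> forall t, a t = b t.
Proof.
  intros HF Ha Hb H0 t. destruct (Rle_dec 0 t).
  - apply (solves_unique_forward n F); auto.
  - rewrite <- (Ropp_involutive t).
    apply (solves_unique_forward n (fun x => vscale (-1) (F x)) (fun s => a (- s)) (fun s => b (- s)));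
      [apply locally_lipschitz_opp|apply solves_time_reversal..|rewrite Ropp_0|]; auto; lra.
Qed.

Lemma derivable_pt_lim_shift (g : R -> R) c t l :
  derivable_pt_lim g (t + c) l -> derivable_pt_lim (fun s => g (s + c)) t l.
Proof.
  intros H eps He. destruct (H eps He) as [d Hd]. exists d. intros h Hh1 Hh2.
  replace (t + h + c) with (t + c + h) by ring. apply Hd; auto.
Qed.

Lemma flow_add n (f : Rn n -> Rn n) phi : locally_lipschitz f -> is_flow f phi ->
  forall y t0 t, phi (phi y t0) t = phi y (t + t0).
Proof.
  intros Hf Hphi y t0 t.
  apply (solves_unique n f (phi (phi y t0)) (fun t => phi y (t + t0)) Hf).
  - intros s j. apply (proj2 (Hphi _)).
  - intros s j. apply (derivable_pt_lim_shift (fun s => phi y s j)), (proj2 (Hphi _)).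
  - rewrite (proj1 (Hphi _)), Rplus_0_l. reflexivity.
Qed.

(** * Shadowing a trajectory by [mu]-solutions *)

Lemma compact_interval_uniform_param (a b : R) (P : R -> R -> Prop) : a <= b ->
  (forall s d d', 0 < d' <= d -> P s d -> P s d') ->
  (forall s0, a <= s0 <= b -> exists r d, 0 < r /\ 0 < d /\ forall s, Rabs (s - s0) < r -> P s d) ->
  exists d, 0 < d /\ forall s, a <= s <= b -> P s d.
Proof.
  intros Hab Hmono Hloc.
  set (E := fun u => a <= u <= b /\ exists d, 0 < d /\ forall s, a <= s <= u -> P s d).
  assert (HEa : E a).
  { split; [lra|]. destruct (Hloc a) as [r [d [Hr [Hd H]]]]; [lra|]. exists d. split; auto.
    intros s Hs. apply H. replace (s - a) with 0 by lra. rewrite Rabs_R0; auto. }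
  destruct (completeness E) as [c Hc]; [exists b; intros u [Hu _]; lra|exists a; auto|].
  assert (Hac : a <= c) by (apply (proj1 Hc); auto).
  assert (Hcb : c <= b) by (apply (proj2 Hc); intros u [Hu _]; lra).
  destruct (Hloc c) as [r [d0 [Hr [Hd0 H0]]]]; [lra|].
  destruct (is_lub_approx E c (c - r) Hc) as [u [[Hu1 [du [Hdu Hu2]]] Hu3]]; [lra|].
  assert (HE : E (Rmin b (c + r / 2))).
  { split; [split; [apply Rmin_glb; lra|apply Rmin_l]|].
    assert (Hd : 0 < Rmin du d0) by (apply Rmin_glb_lt; auto).
    exists (Rmin du d0). split; auto.
    intros s Hs. assert (s <= c + r / 2) by (eapply Rle_trans; [apply Hs|apply Rmin_r]).
    destruct (Rle_dec s u).
    - eapply Hmono; [|apply Hu2; lra]. split; [exact Hd|apply Rmin_l].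
    - eapply Hmono; [|apply H0; apply Rabs_def1; lra]. split; [exact Hd|apply Rmin_r]. }
  destruct (Rle_dec b (c + r / 2)).
  - rewrite Rmin_left in HE by lra. destruct HE as [_ HE]. exact HE.
  - pose proof (proj1 Hc _ HE) as Hle. rewrite Rmin_right in Hle by lra. lra.
Qed.

Lemma continuous_uniform_near_arc n (f : Rn n -> Rn n) (g : R -> Rn n) s1 s2 e :
  (forall j, continuous_Rn (fun x => f x j)) -> solves f g -> s1 <= s2 -> 0 < e ->
  exists d, 0 < d /\ forall s, s1 <= s <= s2 -> forall q, norm1 (vsub q (g s)) < d ->
    forall j, Rabs (f q j - f (g s) j) < e.
Proof.
  intros Hf Hg H12 He.
  assert (HN : 0 < INR n + 1) by (pose proof (pos_INR n); lra).
  destruct (fin_choice_small n (fun j d => forall s, s1 <= s <= s2 -> forall q,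
              norm1 (vsub q (g s)) < d -> Rabs (f q j - f (g s) j) < e)) as [d [Hd Hall]].
  { intros j d d' Hd' Hj s Hs q Hq. apply Hj; auto. lra. }
  2: { exists d. split; auto. }
  intros j.
  apply (compact_interval_uniform_param s1 s2
           (fun s d => forall q, norm1 (vsub q (g s)) < d -> Rabs (f q j - f (g s) j) < e)); auto.
  { intros s d d' Hd' Hq q Hq'. apply Hq. lra. }
  intros s0 _. destruct (Hf j (g s0) (e / 2)) as [d0 [Hd0 Hnear]]; [lra|].
  assert (Hr0 : 0 < d0 / (2 * (INR n + 1))) by (apply Rdiv_lt_0_compat; lra).
  destruct (solves_stays_in_box n f g s0 _ Hg Hr0) as [r [Hr Hbox]].
  exists r, (d0 / 2). repeat split; [auto|lra|]. intros s Hs q Hq.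
  assert (Hgs : norm1 (vsub (g s) (g s0)) < d0 / 2).
  { eapply Rle_lt_trans; [apply norm1_le_INR_mul; intros i; left; apply (Hbox s Hs i)|].
    apply INR_mul_lt_of_le_div; [lra|lra|]. right. field. lra. }
  assert (Hq0 : dist_Rn q (g s0) < d0).
  { eapply Rle_lt_trans; [apply norm_le_norm1|].
    eapply Rle_lt_trans; [apply (norm1_vsub_triang n q (g s) (g s0))|]. lra. }
  assert (Hgs0 : dist_Rn (g s) (g s0) < d0) by (eapply Rle_lt_trans; [apply norm_le_norm1|lra]).
  pose proof (Hnear _ Hq0). pose proof (Hnear _ Hgs0).
  replace (f q j - f (g s) j) with ((f q j - f (g s0) j) - (f (g s) j - f (g s0) j)) by ring.
  eapply Rle_lt_trans; [apply Rabs_triang|]. rewrite Rabs_Ropp. lra.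
Qed.

Section Correction.

Import Coquelicot.Coquelicot.

Lemma derivable_pt_lim_correction A C K T t : T <> 0 ->
  derivable_pt_lim (fun s => A + s / T * C + s * (s - T) / T * K) t
    (C / T + (2 * t - T) / T * K).
Proof. intros HT. apply is_derive_Reals. auto_derive; [auto|field; auto]. Qed.

End Correction.

Lemma Rabs_correction_le A C K T s : 0 < T -> 0 <= s <= T ->
  Rabs (A + s / T * C + s * (s - T) / T * K) <= Rabs A + Rabs C + T * Rabs K.
Proof.
  intros HT Hs.
  assert (Hu : 0 <= s / T <= 1).
  { split; [apply Rle_mult_inv_pos; lra|]. apply Rmult_le_reg_r with T; auto.
    unfold Rdiv. rewrite Rmult_assoc, Rinv_l; lra. }
  replace (s * (s - T) / T) with (s / T * (s - T)) by (field; lra).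
  pose proof (Rabs_pos C). pose proof (Rabs_pos K).
  assert (Rabs (s / T * C) <= Rabs C) by (rewrite Rabs_mult, (Rabs_right (s / T)) by lra; nra).
  assert (Rabs (s / T * (s - T) * K) <= T * Rabs K).
  { rewrite !Rabs_mult, (Rabs_right (s / T)), (Rabs_left1 (s - T)) by lra.
    assert (s / T * - (s - T) <= T) by nra. nra. }
  eapply Rle_trans; [apply Rabs_triang|]. eapply Rle_trans; [apply Rplus_le_compat_r, Rabs_triang|].
  lra.
Qed.

Lemma Rabs_correction_deriv_le C K T s : 0 < T -> 0 <= s <= T ->
  Rabs (C / T + (2 * s - T) / T * K) <= Rabs C / T + Rabs K.
Proof.
  intros HT Hs.
  assert (Hw : Rabs ((2 * s - T) / T) <= 1).
  { unfold Rdiv. rewrite Rabs_mult, (Rabs_right (/ T)) by (apply Rle_ge, Rlt_le, Rinv_0_lt_compat; auto).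
    apply Rmult_le_reg_r with T; auto. rewrite Rmult_assoc, Rinv_l by lra.
    rewrite Rmult_1_r, Rmult_1_l. apply Rabs_le; lra. }
  eapply Rle_trans; [apply Rabs_triang|]. apply Rplus_le_compat.
  - unfold Rdiv. rewrite Rabs_mult, (Rabs_right (/ T)); [lra|].
    apply Rle_ge, Rlt_le, Rinv_0_lt_compat; auto.
  - rewrite Rabs_mult. pose proof (Rabs_pos K). pose proof (Rabs_pos ((2 * s - T) / T)). nra.
Qed.

Lemma derivable_pt_lim_glue (P1 P2 D1 D2 : R -> R) T :
  (forall t, derivable_pt_lim P1 t (D1 t)) -> (forall t, derivable_pt_lim P2 t (D2 t)) ->
  P1 T = P2 T -> D1 T = D2 T ->
  forall t, derivable_pt_lim (fun s => if Rle_dec s T then P1 s else P2 s) t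
              (if Rle_dec t T then D1 t else D2 t).
Proof.
  intros H1 H2 HP HD t eps He.
  destruct (H1 t eps He) as [d1 Hd1]. destruct (H2 t eps He) as [d2 Hd2].
  destruct (Rtotal_order t T) as [Hlt|[<-|Hgt]].
  - assert (Hp : 0 < Rmin d1 (T - t)) by (apply Rmin_glb_lt; [apply cond_pos|lra]).
    exists (mkposreal _ Hp). intros h Hh Hh2. simpl in Hh2.
    assert (Rabs h < d1) by (eapply Rlt_le_trans; [exact Hh2|apply Rmin_l]).
    assert (Rabs h < T - t) by (eapply Rlt_le_trans; [exact Hh2|apply Rmin_r]).
    apply Rabs_def2 in H0.
    destruct (Rle_dec (t + h) T); [|lra]. destruct (Rle_dec t T); [|lra]. apply Hd1; auto.
  - assert (Hp : 0 < Rmin d1 d2) by (apply Rmin_glb_lt; apply cond_pos).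
    exists (mkposreal _ Hp). intros h Hh Hh2. simpl in Hh2.
    assert (Rabs h < d1) by (eapply Rlt_le_trans; [exact Hh2|apply Rmin_l]).
    assert (Rabs h < d2) by (eapply Rlt_le_trans; [exact Hh2|apply Rmin_r]).
    destruct (Rle_dec t t); [|lra].
    destruct (Rle_dec (t + h) t); [apply Hd1; auto|].
    rewrite HP, HD. apply Hd2; auto.
  - assert (Hp : 0 < Rmin d2 (t - T)) by (apply Rmin_glb_lt; [apply cond_pos|lra]).
    exists (mkposreal _ Hp). intros h Hh Hh2. simpl in Hh2.
    assert (Rabs h < d2) by (eapply Rlt_le_trans; [exact Hh2|apply Rmin_l]).
    assert (Rabs h < t - T) by (eapply Rlt_le_trans; [exact Hh2|apply Rmin_r]).
    apply Rabs_def2 in H0.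
    destruct (Rle_dec (t + h) T); [lra|]. destruct (Rle_dec t T); [lra|]. apply Hd2; auto.
Qed.

Lemma has_deriv_nonneg_of_derivable n (x : R -> Rn n) (dx : Rn n) t :
  (forall i, derivable_pt_lim (fun s => x s i) t (dx i)) -> has_deriv_nonneg x t dx.
Proof.
  intros H i eps He. destruct (H i eps He) as [d Hd]. exists d. split; [apply cond_pos|].
  intros s Hs Hne Hst. specialize (Hd (s - t)). replace (t + (s - t)) with s in Hd by ring.
  apply Hd; auto. lra.
Qed.

Lemma eps_solution_glue_flow n (f : Rn n -> Rn n) phi mu (y dy : R -> Rn n) T w :
  is_flow f phi -> 0 <= mu -> 0 <= T ->
  (forall s i, derivable_pt_lim (fun u => y u i) s (dy s i)) ->
  (forall s, 0 <= s <= T -> norm_Rn (vsub (f (y s)) (dy s)) <= mu) ->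
  y T = w -> dy T = f w ->
  exists x, eps_solution f mu x /\ x 0 = y 0 /\ x T = w.
Proof.
  intros Hphi Hmu HT Hy Hbound HyT HdyT.
  set (x := fun s => if Rle_dec s T then y s else phi w (s - T)).
  set (dx := fun s => if Rle_dec s T then dy s else f (phi w (s - T))).
  assert (HwT : phi w (T - T) = w) by (rewrite Rminus_diag; apply (proj1 (Hphi w))).
  exists x. split; [|unfold x; split; destruct (Rle_dec _ T); auto; lra].
  exists dx. intros t Ht. split.
  - apply has_deriv_nonneg_of_derivable. intros i.
    assert (Hx : (fun s => x s i) = fun s => if Rle_dec s T then y s i else phi w (s - T) i)
      by (apply functional_extensionality; intros s; unfold x; destruct (Rle_dec s T); auto).
    assert (Hdx : dx t i = if Rle_dec t T then dy t i else f (phi w (t - T)) i)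
      by (unfold dx; destruct (Rle_dec t T); auto).
    rewrite Hx, Hdx.
    apply (derivable_pt_lim_glue (fun s => y s i) (fun s => phi w (s - T) i)
             (fun s => dy s i) (fun s => f (phi w (s - T)) i)); auto.
    + intros s. apply (derivable_pt_lim_shift (fun u => phi w u i) (- T)), (proj2 (Hphi w)).
    + rewrite HyT, HwT. reflexivity.
    + rewrite HdyT, HwT. reflexivity.
  - unfold x, dx. destruct (Rle_dec t T); [apply Hbound; lra|].
    rewrite norm_vsub_diag. exact Hmu.
Qed.

(* Follow [g] plus a quadratic correction matching both endpoints and, at [s2], the velocity
   [f w], so that the flow from [w] can be glued on afterwards. *)
Lemma quadratic_shadow n (f : Rn n -> Rn n) (g : R -> Rn n) s1 s2 eta theta z w :
  solves f g -> s1 < s2 ->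
  (forall i, Rabs (z i - g s1 i) <= eta) -> (forall i, Rabs (w i - g s2 i) <= eta) ->
  (forall i, Rabs (f w i - f (g s2) i) <= theta) ->
  exists y dy : R -> Rn n,
    (forall s i, derivable_pt_lim (fun u => y u i) s (dy s i)) /\
    (forall s i, 0 <= s <= s2 - s1 ->
       Rabs (y s i - g (s + s1) i) <= 5 * eta + (s2 - s1) * theta /\
       (s2 - s1) * Rabs (dy s i - f (g (s + s1)) i) <= 4 * eta + (s2 - s1) * theta) /\
    y 0 = z /\ y (s2 - s1) = w /\ dy (s2 - s1) = f w.
Proof.
  intros Hg H12 Hz Hw Hfw.
  set (T := s2 - s1). assert (HT : 0 < T) by (unfold T; lra).
  set (a := fun i => z i - g s1 i).
  set (c := fun i => w i - g s2 i - a i).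
  set (k := fun i => f w i - f (g s2) i - c i / T).
  exists (fun s i => g (s + s1) i + (a i + s / T * c i + s * (s - T) / T * k i)),
         (fun s i => f (g (s + s1)) i + (c i / T + (2 * s - T) / T * k i)).
  split; [|split; [|split; [|split]]].
  - intros s i. apply derivable_pt_lim_plus.
    + apply (derivable_pt_lim_shift (fun u => g u i)), Hg.
    + apply derivable_pt_lim_correction. lra.
  - intros s i Hs. rewrite !Rplus_minus_l.
    assert (Hc : Rabs (c i) <= 2 * eta).
    { unfold c, a. replace (w i - g s2 i - (z i - g s1 i)) with ((w i - g s2 i) + - (z i - g s1 i)) by ring.
      eapply Rle_trans; [apply Rabs_triang|]. rewrite Rabs_Ropp. pose proof (Hz i). pose proof (Hw i). lra. }
    assert (Hk : T * Rabs (k i) <= T * theta + Rabs (c i)).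
    { rewrite <- (Rabs_right T), <- Rabs_mult by lra. unfold k.
      replace (T * (f w i - f (g s2) i - c i / T)) with (T * (f w i - f (g s2) i) + - c i) by (field; lra).
      eapply Rle_trans; [apply Rabs_triang|]. rewrite Rabs_Ropp, Rabs_mult, (Rabs_right T) by lra.
      pose proof (Hfw i). nra. }
    split.
    + eapply Rle_trans; [apply Rabs_correction_le; auto|]. pose proof (Hz i). unfold a. lra.
    + eapply Rle_trans; [apply Rmult_le_compat_l; [lra|apply Rabs_correction_deriv_le; auto]|].
      replace (T * (Rabs (c i) / T + Rabs (k i))) with (Rabs (c i) + T * Rabs (k i)) by (field; lra).
      lra.
  - apply functional_extensionality; intros i. unfold a. rewrite Rplus_0_l. field. lra.
  - apply functional_extensionality; intros i. unfold c, a, T.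
    replace (s2 - s1 + s1) with s2 by ring. field. lra.
  - apply functional_extensionality; intros i. unfold k, T.
    replace (s2 - s1 + s1) with s2 by ring. field. lra.
Qed.

Lemma shadowing_curve n (f : Rn n -> Rn n) (g : R -> Rn n) s1 s2 delta :
  (forall j, continuous_Rn (fun x => f x j)) -> solves f g -> s1 < s2 -> 0 < delta ->
  exists eta, 0 < eta /\ forall z w, box (g s1) eta z -> dist_Rn w (g s2) < eta ->
    exists y dy : R -> Rn n,
      (forall s i, derivable_pt_lim (fun u => y u i) s (dy s i)) /\
      (forall s i, 0 <= s <= s2 - s1 ->
         Rabs (y s i - g (s + s1) i) <= delta /\ Rabs (dy s i - f (g (s + s1)) i) <= delta) /\
      y 0 = z /\ y (s2 - s1) = w /\ dy (s2 - s1) = f w.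
Proof.
  intros Hf Hg H12 Hdelta.
  set (T := s2 - s1). assert (HT : 0 < T) by (unfold T; lra).
  set (theta := delta / (2 * (T + 1))).
  assert (Htheta : 0 < theta) by (apply Rdiv_lt_0_compat; lra).
  assert (Htheta_delta : 2 * T * theta <= delta /\ 2 * theta <= delta).
  { assert (theta * (2 * (T + 1)) = delta) by (unfold theta; field; lra). split; nra. }
  destruct (fin_choice_small n (fun j d => forall q, dist_Rn q (g s2) < d ->
              Rabs (f q j - f (g s2) j) < theta)) as [d [Hd Hcont]].
  { intros j d d' Hd' H q Hq. apply H. lra. }
  { intros j. destruct (Hf j (g s2) theta Htheta) as [d [Hd Hd']]. exists d; split; auto. }
  set (eta := Rmin d (T * theta / 5)).
  assert (Heta : 0 < eta) by (apply Rmin_glb_lt; [|apply Rdiv_lt_0_compat; [apply Rmult_lt_0_compat|]]; lra).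
  assert (Heta_le : eta <= d /\ 5 * eta <= T * theta)
    by (unfold eta; split; [apply Rmin_l|]; pose proof (Rmin_r d (T * theta / 5)); lra).
  exists eta. split; auto. intros z w Hz Hw.
  destruct (quadratic_shadow n f g s1 s2 eta theta z w) as [y [dy [Hdy [Hclose Hends]]]]; auto.
  - intros i. left. apply Hz.
  - intros i. left. eapply Rle_lt_trans; [apply (Rabs_le_norm n (vsub w (g s2)))|exact Hw].
  - intros i. left. apply Hcont. lra.
  - exists y, dy. split; [auto|split; [|exact Hends]]. intros s i Hs.
    destruct (Hclose s i Hs) as [Hy Hdy']. fold T in Hy, Hdy'. split; [lra|].
    apply Rmult_le_reg_l with T; auto. nra.
Qed.

Lemma defect_le_near n (f : Rn n -> Rn n) (p q dq : Rn n) du B delta mu :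
  (forall q', norm1 (vsub q' p) < du -> forall j, Rabs (f q' j - f p j) < B) ->
  (forall i, Rabs (q i - p i) <= delta) -> (forall i, Rabs (dq i - f p i) <= delta) ->
  INR n * delta < du -> INR n * (B + delta) <= mu ->
  norm_Rn (vsub (f q) dq) <= mu.
Proof.
  intros Hf Hq Hdq Hdu Hmu.
  assert (Hqp : norm1 (vsub q p) < du) by (eapply Rle_lt_trans; [apply norm1_le_INR_mul|]; eauto).
  eapply Rle_trans; [apply norm_le_norm1|].
  eapply Rle_trans; [apply (norm1_le_INR_mul n _ (B + delta))|exact Hmu].
  intros i. unfold vsub.
  replace (f q i - dq i) with ((f q i - f p i) - (dq i - f p i)) by ring.
  eapply Rle_trans; [apply Rabs_triang|]. rewrite Rabs_Ropp.
  pose proof (Hf q Hqp i). pose proof (Hdq i). lra.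
Qed.

Lemma near_solution_connects n (f : Rn n -> Rn n) (g : R -> Rn n) s1 s2 mu :
  (forall j, continuous_Rn (fun x => f x j)) -> solves f g -> s1 < s2 -> 0 < mu ->
  exists eta, 0 < eta /\ forall z w, box (g s1) eta z -> dist_Rn w (g s2) < eta ->
    exists y dy : R -> Rn n,
      (forall s i, derivable_pt_lim (fun u => y u i) s (dy s i)) /\
      (forall s, 0 <= s <= s2 - s1 -> norm_Rn (vsub (f (y s)) (dy s)) <= mu) /\
      y 0 = z /\ y (s2 - s1) = w /\ dy (s2 - s1) = f w.
Proof.
  intros Hf Hg H12 Hmu.
  set (N := INR n + 1). assert (HN : 0 < N) by (unfold N; pose proof (pos_INR n); lra).
  set (B := mu / (2 * N)). assert (HB : 0 < B) by (apply Rdiv_lt_0_compat; lra).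
  destruct (continuous_uniform_near_arc n f g s1 s2 B Hf Hg) as [du [Hdu Hunif]]; [lra|auto|].
  set (delta := Rmin B (du / N)).
  assert (Hdelta : 0 < delta) by (apply Rmin_glb_lt; [|apply Rdiv_lt_0_compat]; lra).
  assert (Hdelta_le : delta <= B /\ delta <= du / N) by (split; [apply Rmin_l|apply Rmin_r]).
  destruct (shadowing_curve n f g s1 s2 delta Hf Hg H12 Hdelta) as [eta [Heta Hshadow]].
  exists eta. split; auto. intros z w Hz Hw.
  destruct (Hshadow z w Hz Hw) as [y [dy [Hdy [Hclose Hends]]]].
  exists y, dy. repeat split; try apply Hends; auto.
  intros s Hs. apply (defect_le_near n f (g (s + s1)) (y s) (dy s) du B delta mu).
  - apply Hunif. lra.
  - intros i. apply (Hclose s i Hs).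
  - intros i. apply (Hclose s i Hs).
  - apply INR_mul_lt_of_le_div; fold N; lra.
  - left. apply INR_mul_lt_of_le_div; fold N; [lra|lra|].
    assert (2 * B = mu / N) by (unfold B; field; lra). lra.
Qed.

(** * Trajectories meet the boundary at most once *)

Lemma closure_closure_box n (V : Rn n -> Prop) p : closure_Rn (closure_Rn V) p ->
  forall eta, 0 < eta -> exists z, V z /\ box p eta z.
Proof.
  intros H eta He. destruct (H (eta / 2)) as [y [Hy Hpy]]; [lra|].
  destruct (Hy (eta / 2)) as [z [Hz Hyz]]; [lra|]. exists z. split; auto. intros i.
  pose proof (Rabs_le_norm n (vsub p y) i). pose proof (Rabs_le_norm n (vsub y z) i).
  unfold dist_Rn, vsub in *.
  replace (z i - p i) with (- ((p i - y i) + (y i - z i))) by ring. rewrite Rabs_Ropp.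
  eapply Rle_lt_trans; [apply Rabs_triang|]. lra.
Qed.

Lemma robust_invariant_interior_later n (f : Rn n -> Rn n) phi (V : Rn n -> Prop) mu
    (g : R -> Rn n) s1 s2 :
  (forall j, continuous_Rn (fun x => f x j)) -> is_flow f phi -> 0 < mu ->
  (forall y, reach f mu V y -> V y) -> solves f g ->
  closure_Rn (closure_Rn V) (g s1) -> s1 < s2 ->
  exists eps, 0 < eps /\ forall w, dist_Rn w (g s2) < eps -> V w.
Proof.
  intros Hf Hphi Hmu Hinv Hg Hcl H12.
  destruct (near_solution_connects n f g s1 s2 mu Hf Hg H12 Hmu) as [eta [Heta Hconnect]].
  destruct (closure_closure_box n V _ Hcl eta Heta) as [z [Hz Hzbox]].
  exists eta. split; auto. intros w Hw.
  destruct (Hconnect z w Hzbox Hw) as [y [dy [Hdy [Hbound [Hy0 [HyT HdyT]]]]]].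
  destruct (eps_solution_glue_flow n f phi mu y dy (s2 - s1) w) as [x [Hx [Hx0 HxT]]];
    auto; try lra.
  apply Hinv. exists x, (s2 - s1). repeat split; auto; [congruence|lra].
Qed.

Lemma boundary_closure_not_revisited n (f : Rn n -> Rn n) phi (V : Rn n -> Prop) mu
    (g : R -> Rn n) s s' :
  (forall j, continuous_Rn (fun x => f x j)) -> is_flow f phi -> 0 < mu ->
  (forall y, reach f mu V y -> V y) -> solves f g ->
  boundary_Rn (closure_Rn V) (g s) -> boundary_Rn (closure_Rn V) (g s') -> ~ s < s'.
Proof.
  intros Hf Hphi Hmu Hinv Hg [Hcl _] [_ Hout] Hlt.
  destruct (robust_invariant_interior_later n f phi V mu g s s' Hf Hphi Hmu Hinv Hg Hcl Hlt)
    as [e [He Hball]].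
  destruct (Hout e He) as [q [Hq Hqd]]. apply Hq. intros e' He'. exists q. split.
  - apply Hball. unfold dist_Rn. rewrite norm_vsub_sym. exact Hqd.
  - unfold dist_Rn. rewrite norm_vsub_diag. exact He'.
Qed.

Theorem lemma2 (n : nat) (f : Rn n -> Rn n) (phi : Rn n -> R -> Rn n)
  (I U V : Rn n -> Prop) (mu : R) :
  smooth f ->
  is_flow f phi ->
  0 < mu ->
  robustly_safe f I U mu ->
  (forall x, ~ (closure_Rn I x /\ closure_Rn U x)) ->
  bounded_Rn (complement_Rn U) ->
  robust_certificate f I U mu V ->
  forall x, reach_flow phi (boundary_Rn (closure_Rn V)) x ->
    exists! t : R, boundary_Rn (closure_Rn V) (phi x t).
Proof.
  intros Hs Hphi Hmu _ _ _ [_ [Hinv _]] x [y [t0 [Hy ->]]].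
  assert (Hf : forall j, continuous_Rn (fun x => f x j)) by (intros j; apply (Hs j 0%nat)).
  assert (Hsol : solves f (phi (phi y t0))) by (intros t i; apply (proj2 (Hphi _))).
  assert (Hback : boundary_Rn (closure_Rn V) (phi (phi y t0) (- t0))).
  { rewrite (flow_add n f phi (smooth_locally_lipschitz n f Hs) Hphi), Rplus_opp_l, (proj1 (Hphi y)).
    exact Hy. }
  exists (- t0). split; auto. intros t Ht.
  destruct (Rtotal_order (- t0) t) as [Hlt|[Heq|Hgt]]; auto; exfalso.
  - exact (boundary_closure_not_revisited n f phi V mu _ _ _ Hf Hphi Hmu Hinv Hsol Hback Ht Hlt).
  - exact (boundary_closure_not_revisited n f phi V mu _ _ _ Hf Hphi Hmu Hinv Hsol Ht Hback Hgt).
Qed.
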